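(* Let $P$ be a set of $n$ points in the plane, no three collinear and no two on a common horizontal line. As $\beta$ runs from $0$ to $\pi$, the total number of events (insertion, deletion, overlap and release events) of $\mathcal{O}_\beta\mathcal{H}(P)$ is $O(n)$.
   Context: For $\beta\in(0,\pi)$, $\mathcal{O}_\beta$ is the pair of lines through the origin with slopes $0$ and $\tan\beta$. Given an apex $a$, every point is uniquely $a+s(1,0)+t(\cos\beta,\sin\beta)$; the four $\mathcal{O}_\beta$-quadrants with apex $a$ are the open sets with $s>0,t>0$ (top-right), $s<0,t>0$ (top-left), $s>0,t<0$ (bottom-right), $s<0,t<0$ (bottom-left); top-right/bottom-left and top-left/bottom-right are opposite pairs. A quadrant is $P$-free if it contains no point of $P$, and $\mathcal{O}_\beta\mathcal{H}(P)$ is the plane minus the union of all $P$-free $\mathcal{O}_\beta$-quadrants. For each quadrant type, the points of $P$ that are apices of a $P$-free quadrant of that type are the vertices of the corresponding $\mathcal{O}_\beta$-staircase. A maximal $\mathcal{O}_\beta$-quadrant is a $P$-free $\mathcal{O}_\beta$-quadrant each of whose two boundary rays contains a point of $P$; an overlapping region is a nonempty intersection of two opposite maximal quadrants (identified by the points of $P$ supporting the two quadrants). An insertion (resp. deletion) event is a value of $\beta$ at which a point of $P$ becomes (resp. ceases to be) a vertex of one of the four staircases; an overlap (resp. release) event is a value of $\beta$ at which an overlapping region is created (resp. destroyed). *)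

From Stdlib Require Import Reals List.
Open Scope R_scope.

Definition point := (R * R)%type.

Inductive quadtype := TR | TL | BR | BL.

(* sign of the s-coordinate (along (1,0)) and t-coordinate (along (cos b, sin b)) *)
Definition sgn_s (q : quadtype) : R :=
  match q with TR | BR => 1 | TL | BL => -1 end.
Definition sgn_t (q : quadtype) : R :=
  match q with TR | TL => 1 | BR | BL => -1 end.

Definition opp_type (q : quadtype) : quadtype :=
  match q with TR => BL | BL => TR | TL => BR | BR => TL end.

Definition decomp (b : R) (a x : point) (s t : R) : Prop :=
  fst x = fst a + s + t * cos b /\ snd x = snd a + t * sin b.

Definition in_quad (b : R) (q : quadtype) (a x : point) : Prop :=
  exists s t, decomp b a x s t /\ sgn_s q * s > 0 /\ sgn_t q * t > 0.

Definition on_hray (b : R) (q : quadtype) (a x : point) : Prop :=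
  exists s, decomp b a x s 0 /\ sgn_s q * s > 0.
Definition on_bray (b : R) (q : quadtype) (a x : point) : Prop :=
  exists t, decomp b a x 0 t /\ sgn_t q * t > 0.

Definition P_free (P : list point) (b : R) (q : quadtype) (a : point) : Prop :=
  forall x, In x P -> ~ in_quad b q a x.

Definition stair_vertex (P : list point) (b : R) (q : quadtype) (p : point) : Prop :=
  In p P /\ P_free P b q p.

Definition max_quad (P : list point) (b : R) (q : quadtype) (a h v : point) : Prop :=
  P_free P b q a /\ In h P /\ on_hray b q a h /\ In v P /\ on_bray b q a v.

Inductive opppair := OTRBL | OTLBR.
Definition opp_first (o : opppair) : quadtype := match o with OTRBL => TR | OTLBR => TL end.

(* the overlapping region of the opposite pair o, identified by the supporting
   points (h1,v1) of the first quadrant and (h2,v2) of the opposite one, exists *)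
Definition overlap_exists (P : list point) (b : R) (o : opppair) (h1 v1 h2 v2 : point) : Prop :=
  exists a1 a2, max_quad P b (opp_first o) a1 h1 v1 /\
    max_quad P b (opp_type (opp_first o)) a2 h2 v2 /\
    exists x, in_quad b (opp_first o) a1 x /\ in_quad b (opp_type (opp_first o)) a2 x.

Definition becomes (f : R -> Prop) (b0 : R) : Prop :=
  exists eps, eps > 0 /\
    (forall b, b0 - eps < b < b0 -> ~ f b) /\ (forall b, b0 < b < b0 + eps -> f b).
Definition ceases (f : R -> Prop) (b0 : R) : Prop :=
  exists eps, eps > 0 /\
    (forall b, b0 - eps < b < b0 -> f b) /\ (forall b, b0 < b < b0 + eps -> ~ f b).

Inductive event :=
| Insertion (q : quadtype) (p : point) (b : R)
| Deletion (q : quadtype) (p : point) (b : R)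
| Overlap (o : opppair) (h1 v1 h2 v2 : point) (b : R)
| Release (o : opppair) (h1 v1 h2 v2 : point) (b : R).

Definition is_event (P : list point) (e : event) : Prop :=
  match e with
  | Insertion q p b0 => 0 < b0 < PI /\ becomes (fun b => stair_vertex P b q p) b0
  | Deletion q p b0 => 0 < b0 < PI /\ ceases (fun b => stair_vertex P b q p) b0
  | Overlap o h1 v1 h2 v2 b0 =>
      0 < b0 < PI /\ becomes (fun b => overlap_exists P b o h1 v1 h2 v2) b0
  | Release o h1 v1 h2 v2 b0 =>
      0 < b0 < PI /\ ceases (fun b => overlap_exists P b o h1 v1 h2 v2) b0
  end.

Definition collinear (a b c : point) : Prop :=
  (fst b - fst a) * (snd c - snd a) - (snd b - snd a) * (fst c - fst a) = 0.

Definition general_position (P : list point) : Prop :=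
  (forall a b c, In a P -> In b P -> In c P -> a <> b -> a <> c -> b <> c ->
     ~ collinear a b c) /\
  (forall a b, In a P -> In b P -> a <> b -> snd a <> snd b).

(* In the sheared coordinates (x - y cot b, y) every O_b-quadrant is axis-parallel, and
   cot b decreases on (0, PI). Quadrants of type TR and BL therefore grow with b while
   those of type TL and BR shrink, so a point enters and leaves each staircase at most
   once: at most 8n insertion and deletion events.
   Two opposite maximal quadrants supported by (h1, v1) and (h2, v2) overlap iff h2 is
   the point directly above h1 and the sheared coordinates satisfy a few strict
   inequalities, so their overlap can only start or stop at an angle where v1 and v2,
   or v1 (resp. v2) and another point on its side, have equal sheared coordinate.
   Charging the event to h1, resp. to the lower (upper) point of that tie, the charged
   point and the kind of event determine b and h1, hence h2, and the remaining
   supports are the unique ones valid at all angles just after (before) b. This gives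
   at most 12n further events. *)

From Stdlib Require Import Reals Lra Psatz List Classical Lia.
Import ListNotations.
Open Scope R_scope.

Definition cot (b : R) : R := cos b / sin b.
Definition shear (c : R) (p : point) : R := fst p - c * snd p.
Definition oshear (s c : R) (p : point) : R := s * shear c p.

Lemma sin_pos_lt_PI b : 0 < b < PI -> 0 < sin b.
Proof. intros [h1 h2]; apply sin_gt_0; lra. Qed.

Lemma cot_decreasing b b' : 0 < b -> b < b' -> b' < PI -> cot b' < cot b.
Proof.
  intros h1 h2 h3. unfold cot.
  assert (s1 : 0 < sin b) by (apply sin_pos_lt_PI; lra).
  assert (s2 : 0 < sin b') by (apply sin_pos_lt_PI; lra).
  assert (s3 : 0 < sin (b' - b)) by (apply sin_gt_0; lra).
  rewrite sin_minus in s3.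
  apply (Rmult_lt_reg_r (sin b * sin b')); [nra|].
  field_simplify; lra.
Qed.

Lemma cot_inj b b' : 0 < b < PI -> 0 < b' < PI -> cot b = cot b' -> b = b'.
Proof.
  intros h1 h2 h. destruct (Rtotal_order b b') as [l|[e|g]]; auto.
  - pose proof (cot_decreasing b b'); lra.
  - pose proof (cot_decreasing b' b); lra.
Qed.

Lemma in_quad_iff b q a x : 0 < b < PI ->
  in_quad b q a x <->
  sgn_t q * (snd x - snd a) > 0 /\ sgn_s q * (shear (cot b) x - shear (cot b) a) > 0.
Proof.
  intros hb. pose proof (sin_pos_lt_PI b hb) as hs.
  unfold in_quad, decomp, shear, cot. split.
  - intros [s [t [[e1 e2] [g1 g2]]]].
    assert (ht : snd x - snd a = t * sin b) by lra.
    assert (hs' : fst x - cos b / sin b * snd x - (fst a - cos b / sin b * snd a) = s).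
    { rewrite e1, e2. field. lra. }
    rewrite hs', ht. split; [|lra].
    destruct q; simpl in *; nra.
  - intros [g1 g2].
    exists (fst x - cos b / sin b * snd x - (fst a - cos b / sin b * snd a)),
           ((snd x - snd a) / sin b).
    assert (0 < / sin b) by (apply Rinv_0_lt_compat; lra).
    split; [split|split]; try (field; lra); [lra|].
    unfold Rdiv. destruct q; simpl in *; nra.
Qed.

Lemma on_hray_iff b q a x : 0 < b < PI ->
  on_hray b q a x <-> snd x = snd a /\ sgn_s q * (shear (cot b) x - shear (cot b) a) > 0.
Proof.
  intros hb. unfold on_hray, decomp, shear. split.
  - intros [s [[e1 e2] g]]. rewrite e1, e2. split; [lra|].
    replace (fst a + s + 0 * cos b - cot b * (snd a + 0 * sin b) - (fst a - cot b * snd a))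
      with s by ring. exact g.
  - intros [e g]. exists (fst x - fst a). rewrite e in g.
    replace (fst x - cot b * snd a - (fst a - cot b * snd a)) with (fst x - fst a) in g by ring.
    split; [split|]; auto; lra.
Qed.

Lemma on_bray_iff b q a x : 0 < b < PI ->
  on_bray b q a x <-> shear (cot b) x = shear (cot b) a /\ sgn_t q * (snd x - snd a) > 0.
Proof.
  intros hb. pose proof (sin_pos_lt_PI b hb) as hs. unfold on_bray, decomp, shear, cot. split.
  - intros [t [[e1 e2] g]]. rewrite e1, e2. split.
    + field. lra.
    + replace (snd a + t * sin b - snd a) with (t * sin b) by ring. destruct q; simpl in *; nra.
  - intros [e g]. exists ((snd x - snd a) / sin b).
    assert (0 < / sin b) by (apply Rinv_0_lt_compat; lra).
    split; [split|].
    + apply (Rmult_eq_reg_r (sin b)); [|lra].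
      assert (fst x * sin b - cos b * snd x = fst a * sin b - cos b * snd a).
      { apply (Rmult_eq_reg_r (/ sin b)); [|apply Rgt_not_eq; lra].
        field_simplify; try lra. field_simplify in e; try lra. }
      field_simplify; try lra; try nra.
    + field. lra.
    + unfold Rdiv. destruct q; simpl in *; nra.
Qed.

Definition upward (f : R -> Prop) : Prop :=
  forall b b', 0 < b -> b < b' -> b' < PI -> f b -> f b'.
Definition downward (f : R -> Prop) : Prop :=
  forall b b', 0 < b -> b < b' -> b' < PI -> f b' -> f b.

Lemma upward_not f : upward f -> downward (fun b => ~ f b).
Proof. intros h b b' h1 h2 h3 nf fb; exact (nf (h b b' h1 h2 h3 fb)). Qed.

Lemma downward_not f : downward f -> upward (fun b => ~ f b).
Proof. intros h b b' h1 h2 h3 nf fb; exact (nf (h b b' h1 h2 h3 fb)). Qed.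

Lemma not_becomes_downward f b0 : downward f -> 0 < b0 < PI -> ~ becomes f b0.
Proof.
  intros hd h0 [e [pe [l r]]].
  assert (0 < Rmin e (Rmin b0 (PI - b0))) by (repeat apply Rmin_glb_lt; lra).
  pose proof (Rmin_l e (Rmin b0 (PI - b0))). pose proof (Rmin_r e (Rmin b0 (PI - b0))).
  pose proof (Rmin_l b0 (PI - b0)). pose proof (Rmin_r b0 (PI - b0)).
  set (m := Rmin e (Rmin b0 (PI - b0))) in *.
  apply (l (b0 - m / 2)); [lra|].
  apply (hd (b0 - m / 2) (b0 + m / 2)); try lra. apply r; lra.
Qed.

Lemma not_becomes_upward_twice f a c : upward f -> 0 < a -> a < c -> c < PI ->
  becomes f a -> ~ becomes f c.
Proof.
  intros hu ha hac hc [ea [pea [_ ra]]] [ec [pec [lc _]]].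
  set (y := a + Rmin ea (c - a) / 2).
  pose proof (Rmin_l ea (c - a)). pose proof (Rmin_r ea (c - a)).
  assert (0 < Rmin ea (c - a)) by (apply Rmin_glb_lt; lra).
  set (x := c - Rmin ec (c - y) / 2).
  pose proof (Rmin_l ec (c - y)). pose proof (Rmin_r ec (c - y)).
  assert (0 < Rmin ec (c - y)) by (apply Rmin_glb_lt; unfold y; lra).
  apply (lc x); [unfold x; lra|].
  apply (hu y x); unfold x, y in *; try lra. apply ra; lra.
Qed.

Lemma becomes_monotone_unique f b0 b1 : upward f \/ downward f ->
  0 < b0 < PI -> 0 < b1 < PI -> becomes f b0 -> becomes f b1 -> b0 = b1.
Proof.
  intros [hu|hd] h0 h1 e0 e1.
  - destruct (Rtotal_order b0 b1) as [l|[q|g]]; auto; exfalso.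
    + exact (not_becomes_upward_twice f b0 b1 hu (proj1 h0) l (proj2 h1) e0 e1).
    + exact (not_becomes_upward_twice f b1 b0 hu (proj1 h1) g (proj2 h0) e1 e0).
  - exfalso; exact (not_becomes_downward f b0 hd h0 e0).
Qed.

Lemma ceases_monotone_unique f b0 b1 : upward f \/ downward f ->
  0 < b0 < PI -> 0 < b1 < PI -> ceases f b0 -> ceases f b1 -> b0 = b1.
Proof.
  intros hm h0 h1 [e0 [p0 [l0 r0]]] [e1 [p1 [l1 r1]]].
  apply (becomes_monotone_unique (fun b => ~ f b)); auto.
  - destruct hm; [right; apply upward_not|left; apply downward_not]; auto.
  - exists e0; repeat split; auto.
  - exists e1; repeat split; auto.
Qed.

Lemma in_quad_monotone b b' q a x : 0 < b -> b < b' -> b' < PI ->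
  match q with
  | TR | BL => in_quad b q a x -> in_quad b' q a x
  | TL | BR => in_quad b' q a x -> in_quad b q a x
  end.
Proof.
  intros h1 h2 h3. pose proof (cot_decreasing b b' h1 h2 h3).
  destruct q; rewrite !in_quad_iff by lra; unfold shear; simpl;
    intros [g1 g2]; split; nra.
Qed.

Lemma stair_vertex_monotone P q p :
  upward (fun b => stair_vertex P b q p) \/ downward (fun b => stair_vertex P b q p).
Proof.
  pose proof (fun b b' x => in_quad_monotone b b' q p x) as mono.
  destruct q; [right|left|left|right]; intros b b' h1 h2 h3 [hin hfree]; split; auto;
    intros x hx hq; exact (hfree x hx (mono b b' x h1 h2 h3 hq)).
Qed.

Definition near (b0 : R) (F : R -> Prop) : Prop :=
  exists d, d > 0 /\ forall b, Rabs (b - b0) < d -> F b.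
Definition frequently (b0 : R) (F : R -> Prop) : Prop :=
  forall d, d > 0 -> exists b, 0 < b < PI /\ Rabs (b - b0) < d /\ F b.

Lemma near_and b0 F G : near b0 F -> near b0 G -> near b0 (fun b => F b /\ G b).
Proof.
  intros [d1 [p1 h1]] [d2 [p2 h2]]. exists (Rmin d1 d2). split; [apply Rmin_glb_lt; auto|].
  pose proof (Rmin_l d1 d2). pose proof (Rmin_r d1 d2).
  intros b hb. split; [apply h1|apply h2]; lra.
Qed.

Lemma near_forall_in {A : Type} (L : list A) b0 (F : A -> R -> Prop) :
  (forall z, In z L -> near b0 (F z)) -> near b0 (fun b => forall z, In z L -> F z b).
Proof.
  induction L as [|a L IH]; intros H.
  - exists 1. split; [lra|]. intros b _ z [].
  - destruct (near_and b0 (F a) (fun b => forall z, In z L -> F z b)) as [d [pd hd]].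
    + apply H; left; auto.
    + apply IH. intros z hz; apply H; right; auto.
    + exists d; split; auto. intros b hb z [<-|hz];
        [exact (proj1 (hd b hb))|exact (proj2 (hd b hb) z hz)].
Qed.

Lemma frequently_impl b0 (F G : R -> Prop) : (forall b, 0 < b < PI -> F b -> G b) ->
  frequently b0 F -> frequently b0 G.
Proof.
  intros FG hF d hd. destruct (hF d hd) as (b & hb & hbd & fb). exists b; auto.
Qed.

Lemma near_frequently b0 F G : near b0 F -> frequently b0 G ->
  exists b, 0 < b < PI /\ F b /\ G b.
Proof.
  intros [d [pd hd]] hG. destruct (hG d pd) as [b [hb [hbd g]]]. exists b; auto.
Qed.

Lemma right_interval_frequently (F : R -> Prop) b0 e : 0 < b0 < PI -> e > 0 ->
  (forall b, b0 < b < b0 + e -> F b) -> frequently b0 F.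
Proof.
  intros hb he h d hd.
  assert (0 < Rmin d (Rmin e (PI - b0))) by (repeat apply Rmin_glb_lt; lra).
  pose proof (Rmin_l d (Rmin e (PI - b0))). pose proof (Rmin_r d (Rmin e (PI - b0))).
  pose proof (Rmin_l e (PI - b0)). pose proof (Rmin_r e (PI - b0)).
  exists (b0 + Rmin d (Rmin e (PI - b0)) / 2). split; [lra|split].
  - rewrite Rabs_right; lra.
  - apply h; lra.
Qed.

Lemma left_interval_frequently (F : R -> Prop) b0 e : 0 < b0 < PI -> e > 0 ->
  (forall b, b0 - e < b < b0 -> F b) -> frequently b0 F.
Proof.
  intros hb he h d hd.
  assert (0 < Rmin d (Rmin e b0)) by (repeat apply Rmin_glb_lt; lra).
  pose proof (Rmin_l d (Rmin e b0)). pose proof (Rmin_r d (Rmin e b0)).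
  pose proof (Rmin_l e b0). pose proof (Rmin_r e b0).
  exists (b0 - Rmin d (Rmin e b0) / 2). split; [lra|split].
  - rewrite Rabs_left; lra.
  - apply h; lra.
Qed.

Lemma becomes_frequently f b0 : 0 < b0 < PI -> becomes f b0 ->
  frequently b0 f /\ frequently b0 (fun b => ~ f b).
Proof.
  intros hb [e [pe [l r]]].
  split; [exact (right_interval_frequently f b0 e hb pe r)
        |exact (left_interval_frequently _ b0 e hb pe l)].
Qed.

Lemma ceases_frequently f b0 : 0 < b0 < PI -> ceases f b0 ->
  frequently b0 f /\ frequently b0 (fun b => ~ f b).
Proof.
  intros hb [e [pe [l r]]].
  split; [exact (left_interval_frequently f b0 e hb pe l)
        |exact (right_interval_frequently _ b0 e hb pe r)].
Qed.

Lemma becomes_two_common_angles f g b0 : 0 < b0 < PI -> becomes f b0 -> becomes g b0 ->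
  exists b1 b2, b1 <> b2 /\ 0 < b1 < PI /\ 0 < b2 < PI /\ f b1 /\ g b1 /\ f b2 /\ g b2.
Proof.
  intros hb [e [pe [_ r]]] [e' [pe' [_ r']]].
  assert (0 < Rmin e (Rmin e' (PI - b0))) by (repeat apply Rmin_glb_lt; lra).
  pose proof (Rmin_l e (Rmin e' (PI - b0))). pose proof (Rmin_r e (Rmin e' (PI - b0))).
  pose proof (Rmin_l e' (PI - b0)). pose proof (Rmin_r e' (PI - b0)).
  set (m := Rmin e (Rmin e' (PI - b0))) in *.
  exists (b0 + m / 2), (b0 + m / 4).
  repeat split; try lra; [apply r|apply r'|apply r|apply r']; lra.
Qed.

Lemma ceases_two_common_angles f g b0 : 0 < b0 < PI -> ceases f b0 -> ceases g b0 ->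
  exists b1 b2, b1 <> b2 /\ 0 < b1 < PI /\ 0 < b2 < PI /\ f b1 /\ g b1 /\ f b2 /\ g b2.
Proof.
  intros hb [e [pe [l _]]] [e' [pe' [l' _]]].
  assert (0 < Rmin e (Rmin e' b0)) by (repeat apply Rmin_glb_lt; lra).
  pose proof (Rmin_l e (Rmin e' b0)). pose proof (Rmin_r e (Rmin e' b0)).
  pose proof (Rmin_l e' b0). pose proof (Rmin_r e' b0).
  set (m := Rmin e (Rmin e' b0)) in *.
  exists (b0 - m / 2), (b0 - m / 4).
  repeat split; try lra; [apply l|apply l'|apply l|apply l']; lra.
Qed.

Lemma near_trig_pos A B b0 : A * sin b0 + B * cos b0 > 0 ->
  near b0 (fun b => A * sin b + B * cos b > 0).
Proof.
  intros h.
  assert (hc : continuity_pt (fun b => A * sin b + B * cos b) b0) by reg.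
  destruct (hc (A * sin b0 + B * cos b0) h) as [d [pd hd]].
  exists d; split; auto. intros b hb.
  destruct (Req_dec b b0) as [->|ne]; auto.
  assert (k : Rabs (A * sin b + B * cos b - (A * sin b0 + B * cos b0)) < A * sin b0 + B * cos b0).
  { apply (hd b). split; [split; [exact I|congruence]|exact hb]. }
  apply Rabs_def2 in k. lra.
Qed.

Lemma near_oshear_lt s b0 z v : 0 < b0 < PI -> oshear s (cot b0) z < oshear s (cot b0) v ->
  near b0 (fun b => 0 < b < PI -> oshear s (cot b) z < oshear s (cot b) v).
Proof.
  assert (expand : forall b, sin b <> 0 -> sin b * (oshear s (cot b) v - oshear s (cot b) z) =
    (s * (fst v - fst z)) * sin b + (- (s * (snd v - snd z))) * cos b).
  { intros b h. unfold oshear, shear, cot. field. auto. }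
  intros hb h. pose proof (sin_pos_lt_PI b0 hb).
  destruct (near_trig_pos (s * (fst v - fst z)) (- (s * (snd v - snd z))) b0) as [d [pd hd]].
  { rewrite <- expand by lra. nra. }
  exists d; split; auto. intros b hbd hb'. pose proof (sin_pos_lt_PI b hb').
  specialize (hd b hbd). rewrite <- expand in hd by lra. nra.
Qed.

Definition orientation (o : opppair) : R := match o with OTRBL => 1 | OTLBR => -1 end.

Lemma orientation_cases o : orientation o = 1 \/ orientation o = -1.
Proof. destruct o; simpl; auto. Qed.

(* After multiplying the shear by the orientation, the first quadrant of the pair is
   {y > y h1, u > u v1} and the opposite one is {y < y h2, u < u v2}. *)
Definition overlap_cond (P : list point) (s c : R) (h1 v1 h2 v2 : point) : Prop :=
  In h1 P /\ In v1 P /\ In h2 P /\ In v2 P /\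
  snd h1 < snd v1 /\ snd v2 < snd h2 /\ snd h1 < snd h2 /\
  oshear s c h1 > oshear s c v1 /\ oshear s c h2 < oshear s c v2 /\
  oshear s c v1 < oshear s c v2 /\
  (forall z, In z P -> snd z > snd h1 -> oshear s c z <= oshear s c v1) /\
  (forall z, In z P -> snd z < snd h2 -> oshear s c z >= oshear s c v2).

Lemma overlap_exists_cond P b o h1 v1 h2 v2 : 0 < b < PI ->
  overlap_exists P b o h1 v1 h2 v2 -> overlap_cond P (orientation o) (cot b) h1 v1 h2 v2.
Proof.
  intros hb [a1 [a2 [[F1 [Ih1 [H1 [Iv1 B1]]]] [[F2 [Ih2 [H2 [Iv2 B2]]]] [x [X1 X2]]]]]].
  unfold P_free in F1, F2. unfold overlap_cond, oshear.
  rewrite on_hray_iff in H1, H2 by auto. rewrite on_bray_iff in B1, B2 by auto.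
  rewrite in_quad_iff in X1, X2 by auto.
  destruct o; simpl in *;
    destruct H1 as [H1a H1b]; destruct H2 as [H2a H2b]; destruct B1 as [B1a B1b];
    destruct B2 as [B2a B2b]; destruct X1 as [X1a X1b]; destruct X2 as [X2a X2b];
    repeat split; auto; try lra.
  all: intros z hz hy;
    first [ apply Rnot_lt_le; intro hc; apply (F1 z hz)
          | apply Rnot_lt_ge; intro hc; apply (F2 z hz) ];
    rewrite in_quad_iff by auto; simpl; split; lra.
Qed.

Definition apex (c u y : R) : point := (u + c * y, y).

Lemma shear_apex c u y : shear c (apex c u y) = u.
Proof. unfold shear, apex; simpl; ring. Qed.

Lemma overlap_cond_exists P b o h1 v1 h2 v2 : 0 < b < PI ->
  overlap_cond P (orientation o) (cot b) h1 v1 h2 v2 -> overlap_exists P b o h1 v1 h2 v2.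
Proof.
  intros hb [Ih1 [Iv1 [Ih2 [Iv2 [y1 [y2 [y3 [s1 [s2 [s3 [U D]]]]]]]]]]].
  unfold oshear in *. set (c := cot b) in *.
  set (a1 := apex c (shear c v1) (snd h1)). set (a2 := apex c (shear c v2) (snd h2)).
  assert (e1 : shear c a1 = shear c v1) by apply shear_apex.
  assert (e2 : shear c a2 = shear c v2) by apply shear_apex.
  exists a1, a2. unfold max_quad, P_free.
  rewrite !on_hray_iff, !on_bray_iff by auto. fold c. rewrite e1, e2.
  split; [|split]; [repeat split; auto..|].
  all: try (intros z hz; rewrite in_quad_iff by auto; fold c;
            first [rewrite e1; pose proof (U z hz) | rewrite e2; pose proof (D z hz)]).
  all: try (destruct o; simpl in *; lra).
  exists (apex c ((shear c v1 + shear c v2) / 2) ((snd h1 + snd h2) / 2)).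
  rewrite !in_quad_iff by auto. fold c. rewrite e1, e2, shear_apex.
  destruct o; simpl in *; lra.
Qed.

Lemma overlap_exists_iff P b o h1 v1 h2 v2 : 0 < b < PI ->
  overlap_exists P b o h1 v1 h2 v2 <-> overlap_cond P (orientation o) (cot b) h1 v1 h2 v2.
Proof. intros hb; split; [apply overlap_exists_cond|apply overlap_cond_exists]; auto. Qed.

Definition overlap_frame (P : list point) (h1 v1 h2 v2 : point) : Prop :=
  In h1 P /\ In v1 P /\ In h2 P /\ In v2 P /\ snd h1 < snd v1 /\ snd v2 < snd h2 /\
  snd h1 < snd h2 /\ snd v2 <= snd h1 /\ (forall z, In z P -> ~ (snd h1 < snd z < snd h2)).

Definition overlap_closure (P : list point) (s c : R) (h1 v1 h2 v2 : point) : Prop :=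
  (forall z, In z P -> snd z > snd h1 -> oshear s c z <= oshear s c v1) /\
  (forall z, In z P -> snd z < snd h2 -> oshear s c z >= oshear s c v2) /\
  oshear s c v1 <= oshear s c v2.

Definition upper_tie (P : list point) (s c : R) (h1 v1 : point) : Prop :=
  exists z, In z P /\ z <> v1 /\ snd z > snd h1 /\ oshear s c z = oshear s c v1.
Definition lower_tie (P : list point) (s c : R) (h2 v2 : point) : Prop :=
  exists z, In z P /\ z <> v2 /\ snd z < snd h2 /\ oshear s c z = oshear s c v2.

Lemma overlap_cond_frame P s c h1 v1 h2 v2 :
  overlap_cond P s c h1 v1 h2 v2 -> overlap_frame P h1 v1 h2 v2.
Proof.
  intros [Ih1 [Iv1 [Ih2 [Iv2 [y1 [y2 [y3 [s1 [s2 [s3 [U D]]]]]]]]]]].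
  repeat split; auto.
  - apply Rnot_lt_le; intro hc. pose proof (U v2 Iv2 hc). lra.
  - intros z hz [a1 a2]. pose proof (U z hz a1). pose proof (D z hz a2). lra.
Qed.

Lemma oshear_le_limit s b0 z v (F : R -> Prop) : 0 < b0 < PI -> frequently b0 F ->
  (forall b, 0 < b < PI -> F b -> oshear s (cot b) z <= oshear s (cot b) v) ->
  oshear s (cot b0) z <= oshear s (cot b0) v.
Proof.
  intros hb hF hle. apply Rnot_lt_le; intro hlt.
  destruct (near_frequently b0 _ _ (near_oshear_lt s b0 v z hb hlt) hF) as [b [hb' [lt fb]]].
  pose proof (hle b hb' fb). pose proof (lt hb'). lra.
Qed.

Lemma overlap_cond_limit P s b0 h1 v1 h2 v2 : 0 < b0 < PI ->
  frequently b0 (fun b => overlap_cond P s (cot b) h1 v1 h2 v2) ->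
  overlap_closure P s (cot b0) h1 v1 h2 v2.
Proof.
  intros hb hF. split; [|split].
  - intros z hz hy. apply (oshear_le_limit s b0 z v1 _ hb hF).
    intros b _ (_ & _ & _ & _ & _ & _ & _ & _ & _ & _ & U & _). auto.
  - intros z hz hy. apply Rle_ge, (oshear_le_limit s b0 v2 z _ hb hF).
    intros b _ (_ & _ & _ & _ & _ & _ & _ & _ & _ & _ & _ & D). apply Rge_le; auto.
  - apply (oshear_le_limit s b0 v1 v2 _ hb hF).
    intros b _ (_ & _ & _ & _ & _ & _ & _ & _ & _ & lt & _). lra.
Qed.

(* Without ties all the inequalities of the closure that matter are strict, so they
   survive a small rotation. *)
Lemma overlap_cond_near P s b0 h1 v1 h2 v2 : 0 < b0 < PI ->
  overlap_frame P h1 v1 h2 v2 -> overlap_closure P s (cot b0) h1 v1 h2 v2 ->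
  oshear s (cot b0) v1 < oshear s (cot b0) v2 ->
  ~ upper_tie P s (cot b0) h1 v1 -> ~ lower_tie P s (cot b0) h2 v2 ->
  near b0 (fun b => 0 < b < PI -> overlap_cond P s (cot b) h1 v1 h2 v2).
Proof.
  intros hb [Ih1 [Iv1 [Ih2 [Iv2 [y1 [y2 [y3 [y4 _]]]]]]]] [CU [CD _]] lt nU nD.
  assert (N1 : near b0 (fun b => 0 < b < PI -> oshear s (cot b) v1 < oshear s (cot b) h1)).
  { apply near_oshear_lt; auto. pose proof (CD h1 Ih1 y3). lra. }
  assert (N2 : near b0 (fun b => 0 < b < PI -> oshear s (cot b) h2 < oshear s (cot b) v2)).
  { apply near_oshear_lt; auto. pose proof (CU h2 Ih2 y3). lra. }
  assert (NU : near b0 (fun b => forall z, In z P -> snd z > snd h1 -> z <> v1 ->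
                 0 < b < PI -> oshear s (cot b) z < oshear s (cot b) v1)).
  { apply (near_forall_in P b0 (fun z b => snd z > snd h1 -> z <> v1 ->
             0 < b < PI -> oshear s (cot b) z < oshear s (cot b) v1)).
    intros z hz. destruct (classic (snd z > snd h1 /\ z <> v1)) as [[hy hne]|no].
    - destruct (near_oshear_lt s b0 z v1 hb) as [d [pd hd]].
      + pose proof (CU z hz hy).
        destruct (Req_dec (oshear s (cot b0) z) (oshear s (cot b0) v1)); [|lra].
        exfalso; apply nU; exists z; auto.
      + exists d; split; auto.
    - exists 1; split; [lra|]. intros b _ hy hne. exfalso; auto. }
  assert (ND : near b0 (fun b => forall z, In z P -> snd z < snd h2 -> z <> v2 ->
                 0 < b < PI -> oshear s (cot b) v2 < oshear s (cot b) z)).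
  { apply (near_forall_in P b0 (fun z b => snd z < snd h2 -> z <> v2 ->
             0 < b < PI -> oshear s (cot b) v2 < oshear s (cot b) z)).
    intros z hz. destruct (classic (snd z < snd h2 /\ z <> v2)) as [[hy hne]|no].
    - destruct (near_oshear_lt s b0 v2 z hb) as [d [pd hd]].
      + pose proof (CD z hz hy).
        destruct (Req_dec (oshear s (cot b0) z) (oshear s (cot b0) v2)); [|lra].
        exfalso; apply nD; exists z; auto.
      + exists d; split; auto.
    - exists 1; split; [lra|]. intros b _ hy hne. exfalso; auto. }
  destruct (near_and _ _ _ (near_and _ _ _ (near_oshear_lt s b0 v1 v2 hb lt) N1)
                           (near_and _ _ _ N2 (near_and _ _ _ NU ND)))
    as [d [pd hd]].
  exists d; split; auto. intros b hbd hb'.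
  destruct (hd b hbd) as [[k1 k2] [k3 [kU kD]]].
  repeat split; auto.
  - apply Rlt_gt, k2; auto.
  - intros z hz hy. destruct (classic (z = v1)) as [->|ne]; [lra|].
    apply Rlt_le, kU; auto.
  - intros z hz hy. destruct (classic (z = v2)) as [->|ne]; [lra|].
    apply Rgt_ge, kD; auto.
Qed.

Lemma overlap_switch_tie P s b0 h1 v1 h2 v2 : 0 < b0 < PI ->
  frequently b0 (fun b => overlap_cond P s (cot b) h1 v1 h2 v2) ->
  frequently b0 (fun b => ~ overlap_cond P s (cot b) h1 v1 h2 v2) ->
  overlap_frame P h1 v1 h2 v2 /\ overlap_closure P s (cot b0) h1 v1 h2 v2 /\
  (oshear s (cot b0) v1 = oshear s (cot b0) v2 \/
   (oshear s (cot b0) v1 < oshear s (cot b0) v2 /\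
    (upper_tie P s (cot b0) h1 v1 \/ lower_tie P s (cot b0) h2 v2))).
Proof.
  intros hb hOn hOff.
  assert (Fr : overlap_frame P h1 v1 h2 v2).
  { destruct (hOn 1 ltac:(lra)) as [b [_ [_ o]]]. eapply overlap_cond_frame; eauto. }
  assert (Cl : overlap_closure P s (cot b0) h1 v1 h2 v2) by (apply overlap_cond_limit; auto).
  split; [auto|split; [auto|]].
  destruct (Req_dec (oshear s (cot b0) v1) (oshear s (cot b0) v2)) as [e|ne]; [left; auto|right].
  assert (lt : oshear s (cot b0) v1 < oshear s (cot b0) v2) by (destruct Cl as [_ [_ ?]]; lra).
  split; auto.
  destruct (classic (upper_tie P s (cot b0) h1 v1)) as [u|nu]; [left; auto|].
  destruct (classic (lower_tie P s (cot b0) h2 v2)) as [d|nd]; [right; auto|].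
  destruct (near_frequently b0 _ _ (overlap_cond_near P s b0 h1 v1 h2 v2 hb Fr Cl lt nu nd) hOff)
    as [b [hb' [o no]]].
  exfalso; exact (no (o hb')).
Qed.

Lemma snd_inj P a b : general_position P -> In a P -> In b P -> snd a = snd b -> a = b.
Proof.
  intros [_ g] ha hb e. destruct (classic (a = b)) as [x|n]; auto. exfalso; exact (g a b ha hb n e).
Qed.

Definition top_tie (P : list point) (s c : R) (j : point) : Prop :=
  exists j', In j' P /\ snd j' > snd j /\ oshear s c j' = oshear s c j /\
    forall x, In x P -> snd x > snd j -> oshear s c x <= oshear s c j.
Definition bottom_tie (P : list point) (s c : R) (j : point) : Prop :=
  exists j', In j' P /\ snd j' < snd j /\ oshear s c j' = oshear s c j /\
    forall x, In x P -> snd x < snd j -> oshear s c x >= oshear s c j.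
Definition level_tie (P : list point) (s c : R) (h : point) : Prop :=
  exists a d, In a P /\ In d P /\ snd a > snd h /\ snd d <= snd h /\
    oshear s c a = oshear s c d /\
    (forall x, In x P -> snd x > snd h -> oshear s c x <= oshear s c a) /\
    (forall x, In x P -> snd x <= snd h -> oshear s c x >= oshear s c d).

(* Changing the slope strictly separates the two tied points, which violates the
   extremality condition at one of the two slopes. *)
Lemma top_tie_slope_unique P s c0 c1 j : s = 1 \/ s = -1 ->
  top_tie P s c0 j -> top_tie P s c1 j -> c0 = c1.
Proof.
  intros hs [j1 [i1 [y1 [e1 u1]]]] [j2 [i2 [y2 [e2 u2]]]].
  pose proof (u1 j2 i2 y2). pose proof (u2 j1 i1 y1). unfold oshear, shear in *.
  destruct (Rtotal_order c0 c1) as [l|[q|g]]; auto; exfalso; destruct hs; subst; nra.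
Qed.

Lemma bottom_tie_slope_unique P s c0 c1 j : s = 1 \/ s = -1 ->
  bottom_tie P s c0 j -> bottom_tie P s c1 j -> c0 = c1.
Proof.
  intros hs [j1 [i1 [y1 [e1 u1]]]] [j2 [i2 [y2 [e2 u2]]]].
  pose proof (u1 j2 i2 y2). pose proof (u2 j1 i1 y1). unfold oshear, shear in *.
  destruct (Rtotal_order c0 c1) as [l|[q|g]]; auto; exfalso; destruct hs; subst; nra.
Qed.

Lemma level_tie_slope_unique P s c0 c1 h : s = 1 \/ s = -1 ->
  level_tie P s c0 h -> level_tie P s c1 h -> c0 = c1.
Proof.
  intros hs [a [d [ia [id [ya [yd [e [ua ud]]]]]]]]
            [a' [d' [ia' [id' [ya' [yd' [e' [ua' ud']]]]]]]].
  pose proof (ua a' ia' ya'). pose proof (ud d' id' yd').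
  pose proof (ua' a ia ya). pose proof (ud' d id yd). unfold oshear, shear in *.
  destruct (Rtotal_order c0 c1) as [l|[q|g]]; auto; exfalso; destruct hs; subst; nra.
Qed.

Inductive tie := TieSupports | TieAbove | TieBelow.

Definition tie_witness (P : list point) (s c : R) (t : tie) (j h1 v1 h2 v2 : point) : Prop :=
  overlap_frame P h1 v1 h2 v2 /\ overlap_closure P s c h1 v1 h2 v2 /\
  match t with
  | TieSupports => j = h1 /\ oshear s c v1 = oshear s c v2
  | TieAbove => oshear s c v1 < oshear s c v2 /\ snd j > snd h1 /\
                oshear s c j = oshear s c v1 /\ top_tie P s c j
  | TieBelow => oshear s c v1 < oshear s c v2 /\ snd j < snd h2 /\
                oshear s c j = oshear s c v2 /\ bottom_tie P s c j
  end.

Lemma tie_witness_exists P s b0 h1 v1 h2 v2 : general_position P -> 0 < b0 < PI ->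
  frequently b0 (fun b => overlap_cond P s (cot b) h1 v1 h2 v2) ->
  frequently b0 (fun b => ~ overlap_cond P s (cot b) h1 v1 h2 v2) ->
  exists t j, In j P /\ tie_witness P s (cot b0) t j h1 v1 h2 v2.
Proof.
  intros g hb hOn hOff.
  destruct (overlap_switch_tie P s b0 h1 v1 h2 v2 hb hOn hOff) as [Fr [Cl T]].
  pose proof Fr as (Ih1 & Iv1 & Ih2 & Iv2 & y1 & y2 & y3 & y4 & _).
  pose proof Cl as (CU & CD & _).
  destruct T as [eq|[lt [(z & iz & nz & yz & ez)|(z & iz & nz & yz & ez)]]].
  - exists TieSupports, h1. do 3 (split; [assumption|]). split; auto.
  - assert (snd z <> snd v1) by (intro h; apply nz; apply (snd_inj P); auto).
    destruct (Rtotal_order (snd z) (snd v1)) as [l|[q|gg]]; [|contradiction|].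
    + exists TieAbove, z. do 3 (split; [assumption|]). repeat split; auto.
      exists v1. repeat split; auto; try lra.
      intros x hx hxy. rewrite ez. apply CU; auto; lra.
    + exists TieAbove, v1. do 3 (split; [assumption|]). repeat split; auto; try lra.
      exists z. repeat split; auto; try lra.
      intros x hx hxy. apply CU; auto; lra.
  - assert (snd z <> snd v2) by (intro h; apply nz; apply (snd_inj P); auto).
    destruct (Rtotal_order (snd z) (snd v2)) as [l|[q|gg]]; [|contradiction|].
    + exists TieBelow, v2. do 3 (split; [assumption|]). repeat split; auto; try lra.
      exists z. repeat split; auto; try lra.
      intros x hx hxy. apply CD; auto; lra.
    + exists TieBelow, z. do 3 (split; [assumption|]). repeat split; auto.
      exists v2. repeat split; auto; try lra.
      intros x hx hxy. rewrite ez. apply CD; auto; lra.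
Qed.

Lemma overlap_switch_witness P o h1 v1 h2 v2 b0 : general_position P -> 0 < b0 < PI ->
  frequently b0 (fun b => overlap_exists P b o h1 v1 h2 v2) ->
  frequently b0 (fun b => ~ overlap_exists P b o h1 v1 h2 v2) ->
  exists t j, In j P /\ tie_witness P (orientation o) (cot b0) t j h1 v1 h2 v2.
Proof.
  intros g hb hOn hOff. apply tie_witness_exists; auto.
  - revert hOn. apply frequently_impl. intros b hb'. apply overlap_exists_iff; auto.
  - revert hOff. apply frequently_impl. intros b hb' no ov. apply no, overlap_exists_iff; auto.
Qed.

Lemma highest_unique P (A : point -> Prop) h h' : general_position P -> In h P -> In h' P ->
  A h -> A h' -> (forall x, In x P -> A x -> snd x <= snd h) ->
  (forall x, In x P -> A x -> snd x <= snd h') -> h = h'.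
Proof.
  intros g i i' a a' m m'. apply (snd_inj P); auto.
  pose proof (m h' i' a'). pose proof (m' h i a). lra.
Qed.

Lemma lowest_unique P (A : point -> Prop) h h' : general_position P -> In h P -> In h' P ->
  A h -> A h' -> (forall x, In x P -> A x -> snd x >= snd h) ->
  (forall x, In x P -> A x -> snd x >= snd h') -> h = h'.
Proof.
  intros g i i' a a' m m'. apply (snd_inj P); auto.
  pose proof (m h' i' a'). pose proof (m' h i a). lra.
Qed.

Lemma frame_lower_unique P h1 v1 h2 v2 h1' v1' v2' : general_position P ->
  overlap_frame P h1 v1 h2 v2 -> overlap_frame P h1' v1' h2 v2' -> h1 = h1'.
Proof.
  intros g (Ih1 & _ & _ & _ & _ & _ & y3 & _ & nb) (Ih1' & _ & _ & _ & _ & _ & y3' & _ & nb').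
  apply (snd_inj P); auto.
  destruct (Rtotal_order (snd h1) (snd h1')) as [l|[q|gg]]; auto; exfalso.
  - apply (nb h1' Ih1'); lra.
  - apply (nb' h1 Ih1); lra.
Qed.

Lemma frame_upper_unique P h1 v1 h2 v2 v1' h2' v2' : general_position P ->
  overlap_frame P h1 v1 h2 v2 -> overlap_frame P h1 v1' h2' v2' -> h2 = h2'.
Proof.
  intros g (_ & _ & Ih2 & _ & _ & _ & y3 & _ & nb) (_ & _ & Ih2' & _ & _ & _ & y3' & _ & nb').
  apply (snd_inj P); auto.
  destruct (Rtotal_order (snd h2) (snd h2')) as [l|[q|gg]]; auto; exfalso.
  - apply (nb' h2 Ih2); lra.
  - apply (nb h2' Ih2'); lra.
Qed.

Lemma tie_supports_level P s c j h1 v1 h2 v2 :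
  tie_witness P s c TieSupports j h1 v1 h2 v2 -> j = h1 /\ level_tie P s c h1.
Proof.
  intros [(Ih1 & Iv1 & _ & Iv2 & y1 & _ & y3 & y4 & _) [[CU [CD _]] [-> e]]].
  split; auto. exists v1, v2. repeat split; auto.
  intros x hx hy. apply CD; auto; lra.
Qed.

Lemma tie_above_lower_support P s c j h1 v1 h2 v2 :
  tie_witness P s c TieAbove j h1 v1 h2 v2 ->
  oshear s c h1 > oshear s c j /\
  forall x, In x P -> oshear s c x > oshear s c j -> snd x <= snd h1.
Proof.
  intros [(Ih1 & _ & _ & _ & _ & _ & y3 & _) [[CU [CD _]] [lt [_ [e _]]]]]. split.
  - pose proof (CD h1 Ih1 y3). lra.
  - intros x hx hs. apply Rnot_lt_le. intro hy. pose proof (CU x hx hy). lra.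
Qed.

Lemma tie_below_upper_support P s c j h1 v1 h2 v2 :
  tie_witness P s c TieBelow j h1 v1 h2 v2 ->
  oshear s c h2 < oshear s c j /\
  forall x, In x P -> oshear s c x < oshear s c j -> snd x >= snd h2.
Proof.
  intros [(_ & _ & Ih2 & _ & _ & _ & y3 & _) [[CU [CD _]] [lt [_ [e _]]]]]. split.
  - pose proof (CU h2 Ih2 y3). lra.
  - intros x hx hs. apply Rnot_lt_ge. intro hy. pose proof (CD x hx hy). lra.
Qed.

Lemma tie_witness_determines P s t j b b' h1 v1 h2 v2 h1' v1' h2' v2' :
  general_position P -> s = 1 \/ s = -1 -> 0 < b < PI -> 0 < b' < PI ->
  tie_witness P s (cot b) t j h1 v1 h2 v2 -> tie_witness P s (cot b') t j h1' v1' h2' v2' ->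
  b = b' /\ h1 = h1'.
Proof.
  intros g hs hb hb' W W'. destruct t.
  - destruct (tie_supports_level _ _ _ _ _ _ _ _ W) as [<- L].
    destruct (tie_supports_level _ _ _ _ _ _ _ _ W') as [-> L'].
    split; auto. apply cot_inj; auto. exact (level_tie_slope_unique P s _ _ _ hs L L').
  - assert (eb : b = b').
    { apply cot_inj; auto.
      destruct W as (_ & _ & _ & _ & _ & T). destruct W' as (_ & _ & _ & _ & _ & T').
      exact (top_tie_slope_unique P s _ _ j hs T T'). }
    subst b'. split; auto.
    destruct (tie_above_lower_support _ _ _ _ _ _ _ _ W) as [a m].
    destruct (tie_above_lower_support _ _ _ _ _ _ _ _ W') as [a' m'].
    destruct W as ((Ih1 & _) & _). destruct W' as ((Ih1' & _) & _).
    exact (highest_unique P (fun x => oshear s (cot b) x > oshear s (cot b) j)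
             h1 h1' g Ih1 Ih1' a a' m m').
  - assert (eb : b = b').
    { apply cot_inj; auto.
      destruct W as (_ & _ & _ & _ & _ & T). destruct W' as (_ & _ & _ & _ & _ & T').
      exact (bottom_tie_slope_unique P s _ _ j hs T T'). }
    subst b'. split; auto.
    destruct (tie_below_upper_support _ _ _ _ _ _ _ _ W) as [a m].
    destruct (tie_below_upper_support _ _ _ _ _ _ _ _ W') as [a' m'].
    destruct W as [Fr _]. destruct W' as [Fr' _].
    assert (eh : h2 = h2').
    { apply (lowest_unique P (fun x => oshear s (cot b) x < oshear s (cot b) j)); auto.
      - exact (proj1 (proj2 (proj2 Fr))).
      - exact (proj1 (proj2 (proj2 Fr'))). }
    subst h2'. exact (frame_lower_unique P h1 v1 h2 v2 h1' v1' v2' g Fr Fr').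
Qed.

Lemma oshear_eq_two_slopes P s c c' p q : general_position P -> In p P -> In q P ->
  s = 1 \/ s = -1 -> c <> c' ->
  oshear s c p = oshear s c q -> oshear s c' p = oshear s c' q -> p = q.
Proof.
  intros g ip iq hs hc e e'. apply (snd_inj P); auto.
  unfold oshear, shear in *.
  assert (k : (c - c') * (snd p - snd q) = 0) by (destruct hs; subst; nra).
  apply Rmult_integral in k. destruct k; [exfalso; apply hc|]; lra.
Qed.

Lemma overlap_supports_unique P o b1 b2 h1 v1 h2 v2 v1' h2' v2' : general_position P ->
  0 < b1 < PI -> 0 < b2 < PI -> b1 <> b2 ->
  overlap_exists P b1 o h1 v1 h2 v2 -> overlap_exists P b2 o h1 v1 h2 v2 ->
  overlap_exists P b1 o h1 v1' h2' v2' -> overlap_exists P b2 o h1 v1' h2' v2' ->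
  v1 = v1' /\ h2 = h2' /\ v2 = v2'.
Proof.
  intros g hb1 hb2 ne O1 O2 O1' O2'.
  rewrite overlap_exists_iff in O1, O2, O1', O2' by auto.
  assert (eh : h2 = h2') by (eapply frame_upper_unique; eauto using overlap_cond_frame).
  subst h2'.
  assert (hc : cot b1 <> cot b2) by (intro h; apply ne, cot_inj; auto).
  pose proof (orientation_cases o) as hs.
  destruct O1 as (_ & Iv1 & _ & Iv2 & y1 & y2 & _ & _ & _ & _ & U1 & D1).
  destruct O2 as (_ & _ & _ & _ & _ & _ & _ & _ & _ & _ & U2 & D2).
  destruct O1' as (_ & Iv1' & _ & Iv2' & y1' & y2' & _ & _ & _ & _ & U1' & D1').
  destruct O2' as (_ & _ & _ & _ & _ & _ & _ & _ & _ & _ & U2' & D2').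
  split; [|split]; auto; apply (oshear_eq_two_slopes P (orientation o) (cot b1) (cot b2)); auto.
  - pose proof (U1 v1' Iv1' y1'). pose proof (U1' v1 Iv1 y1). lra.
  - pose proof (U2 v1' Iv1' y1'). pose proof (U2' v1 Iv1 y1). lra.
  - pose proof (D1 v2' Iv2' y2'). pose proof (D1' v2 Iv2 y2). lra.
  - pose proof (D2 v2' Iv2' y2'). pose proof (D2' v2 Iv2 y2). lra.
Qed.

Inductive charge_kind :=
| ChargeInsertion (q : quadtype)
| ChargeDeletion (q : quadtype)
| ChargeOverlap (o : opppair) (t : tie)
| ChargeRelease (o : opppair) (t : tie).

Definition charge_kinds : list charge_kind :=
  let quads := [TR; TL; BR; BL] in
  let ties := [TieSupports; TieAbove; TieBelow] in
  map ChargeInsertion quads ++ map ChargeDeletion quads ++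
  flat_map (fun o => map (ChargeOverlap o) ties ++ map (ChargeRelease o) ties) [OTRBL; OTLBR].

Lemma charge_kinds_length : length charge_kinds = 20%nat.
Proof. reflexivity. Qed.

Lemma in_charge_kinds k : In k charge_kinds.
Proof.
  destruct k; destruct_all quadtype; destruct_all opppair; destruct_all tie; simpl; tauto.
Qed.

Definition charged (P : list point) (e : event) (k : charge_kind) (p : point) : Prop :=
  match e, k with
  | Insertion q p' _, ChargeInsertion q' => q' = q /\ p = p'
  | Deletion q p' _, ChargeDeletion q' => q' = q /\ p = p'
  | Overlap o h1 v1 h2 v2 b, ChargeOverlap o' t =>
      o' = o /\ tie_witness P (orientation o) (cot b) t p h1 v1 h2 v2
  | Release o h1 v1 h2 v2 b, ChargeRelease o' t =>
      o' = o /\ tie_witness P (orientation o) (cot b) t p h1 v1 h2 v2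
  | _, _ => False
  end.

Lemma charge_exists P e : general_position P -> is_event P e ->
  exists k p, In p P /\ charged P e k p.
Proof.
  intros g. destruct e as [q p b|q p b|o h1 v1 h2 v2 b|o h1 v1 h2 v2 b]; simpl; intros [hb ev].
  - exists (ChargeInsertion q), p. destruct (proj1 (becomes_frequently _ _ hb ev) 1 ltac:(lra))
      as (b' & _ & _ & ip & _). auto.
  - exists (ChargeDeletion q), p. destruct (proj1 (ceases_frequently _ _ hb ev) 1 ltac:(lra))
      as (b' & _ & _ & ip & _). auto.
  - destruct (becomes_frequently _ _ hb ev) as [hOn hOff].
    destruct (overlap_switch_witness P o h1 v1 h2 v2 b g hb hOn hOff) as (t & j & ij & W).
    exists (ChargeOverlap o t), j. auto.
  - destruct (ceases_frequently _ _ hb ev) as [hOn hOff].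
    destruct (overlap_switch_witness P o h1 v1 h2 v2 b g hb hOn hOff) as (t & j & ij & W).
    exists (ChargeRelease o t), j. auto.
Qed.

Lemma charged_injective P e e' k p : general_position P -> is_event P e -> is_event P e' ->
  charged P e k p -> charged P e' k p -> e = e'.
Proof.
  intros g ev ev'.
  destruct e as [q p1 b|q p1 b|o h1 v1 h2 v2 b|o h1 v1 h2 v2 b];
  destruct e' as [q' p1' b'|q' p1' b'|o' h1' v1' h2' v2' b'|o' h1' v1' h2' v2' b'];
  destruct k; simpl in *; try tauto;
  destruct ev as [hb E]; destruct ev' as [hb' E'];
  intros [-> C] [eq C']; subst.
  - f_equal. exact (becomes_monotone_unique _ b b' (stair_vertex_monotone P q' p1') hb hb' E E').
  - f_equal. exact (ceases_monotone_unique _ b b' (stair_vertex_monotone P q' p1') hb hb' E E').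
  - destruct (tie_witness_determines P _ t p b b' h1 v1 h2 v2 h1' v1' h2' v2' g
                (orientation_cases o') hb hb' C C') as [<- <-].
    destruct (becomes_two_common_angles _ _ b hb E E')
      as (b1 & b2 & ne & hb1 & hb2 & O1 & O1' & O2 & O2').
    destruct (overlap_supports_unique P o' b1 b2 h1 v1 h2 v2 v1' h2' v2' g hb1 hb2 ne O1 O2 O1' O2')
      as [<- [<- <-]].
    reflexivity.
  - destruct (tie_witness_determines P _ t p b b' h1 v1 h2 v2 h1' v1' h2' v2' g
                (orientation_cases o') hb hb' C C') as [<- <-].
    destruct (ceases_two_common_angles _ _ b hb E E')
      as (b1 & b2 & ne & hb1 & hb2 & O1 & O1' & O2 & O2').
    destruct (overlap_supports_unique P o' b1 b2 h1 v1 h2 v2 v1' h2' v2' g hb1 hb2 ne O1 O2 O1' O2')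
      as [<- [<- <-]].
    reflexivity.
Qed.

Lemma length_le_of_charging {X Y : Type} (l : list X) (S : list Y) (charge : X -> Y -> Prop) :
  NoDup l -> (forall x, In x l -> exists y, In y S /\ charge x y) ->
  (forall x x' y, In x l -> In x' l -> charge x y -> charge x' y -> x = x') ->
  (length l <= length S)%nat.
Proof.
  intros nd. revert S. induction nd as [|a l na nd IH]; intros S cover inj; simpl; [lia|].
  destruct (cover a (or_introl eq_refl)) as [m [im cm]].
  destruct (in_split m S im) as (S1 & S2 & ->).
  enough (length l <= length (S1 ++ S2))%nat by (rewrite !length_app in *; simpl; lia).
  apply IH.
  - intros x hx. destruct (cover x (or_intror hx)) as [y [iy cy]]. exists y. split; auto.
    apply in_app_or in iy as [iy|[<-|iy]]; auto using in_or_app.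
    exfalso. apply na. rewrite (inj a x m (or_introl eq_refl) (or_intror hx) cm cy). exact hx.
  - intros x x' y hx hx'. apply inj; right; auto.
Qed.

Theorem lemma1 :
  exists C : nat, forall P : list point, NoDup P -> general_position P ->
    forall l : list event, NoDup l -> (forall e, In e l -> is_event P e) ->
      (length l <= C * length P)%nat.
Proof.
  exists 20%nat. intros P _ g l nl hl.
  rewrite <- charge_kinds_length, <- length_prod.
  apply (length_le_of_charging l _ (fun e kp => charged P e (fst kp) (snd kp)) nl).
  - intros e he. destruct (charge_exists P e g (hl e he)) as (k & p & ip & c).
    exists (k, p). split; auto using in_prod, in_charge_kinds.
  - intros e e' [k p] he he'. apply charged_injective; auto.
Qed.
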